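(* Let $n,m\geq 0$ be integers and let $Q(n,m)$ be the quiver with two vertices $1,2$, one arrow $x:1\to 2$, one arrow $y:2\to 1$, $n$ loops at vertex $1$ and $m$ loops at vertex $2$. Let $A=\Bbbk Q(n,m)/(\geq 2)$. Then $$\operatorname{fpd}(A\text{-mod})=\tfrac12\Big(\sqrt{(m-n)^2+4}+m+n\Big).$$
   Context: $\Bbbk$ is an algebraically closed field; $\Bbbk Q$ is the path algebra with $e_i\alpha=\delta_{i,t(\alpha)}\alpha$, $\alpha e_j=\delta_{j,s(\alpha)}\alpha$; $(\geq 2)$ is the ideal generated by paths of length $\geq 2$; $A\text{-mod}$ is the category of finite-dimensional left $A$-modules. For a $\Bbbk$-linear abelian category $\mathcal C$: an object $M$ is a brick if $\mathrm{Hom}(M,M)=\Bbbk$; a finite set $\phi=\{X_1,\dots,X_k\}$ of nonzero objects is a brick set if each $X_i$ is a brick and $\dim\mathrm{Hom}(X_i,X_j)=\delta_{ij}$; its adjacency matrix is $A(\phi)=(\dim\mathrm{Ext}^1_{\mathcal C}(X_i,X_j))_{i,j}$; and $\operatorname{fpd}(\mathcal C)=\sup_{\phi}\rho(A(\phi))$, the supremum over all brick sets of the spectral radius $\rho$. *)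

From HB Require Import structures.
From mathcomp Require Import all_boot all_order all_algebra all_field.
Set Implicit Arguments. Unset Strict Implicit. Unset Printing Implicit Defensive.
Import Order.TTheory GRing.Theory Num.Theory.
Local Open Scope ring_scope.

(* Finite-dimensional left modules over A = k Q(n,m) / (paths of length >= 2),
   presented (equivalently) as finite-dimensional representations of the
   quiver Q(n,m) in which every composite of two arrows acts as zero.
   Vertex 1 has space F^d1, vertex 2 has space F^d2 (row vectors); an arrow
   a : i -> j acts by right multiplication v |-> v *m M_a.
     rx     : the arrow x : 1 -> 2
     ry     : the arrow y : 2 -> 1
     rl1 i  : the i-th loop at vertex 1 (i < n)
     rl2 j  : the j-th loop at vertex 2 (j < m)
   The composite "a then b" acts as M_a *m M_b. *)
Record rmod (F : fieldType) (n m : nat) := RMod {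
  d1 : nat;
  d2 : nat;
  rx : 'M[F]_(d1, d2);
  ry : 'M[F]_(d2, d1);
  rl1 : 'I_n -> 'M[F]_d1;
  rl2 : 'I_m -> 'M[F]_d2;
  rad2_zero :
    (rx *m ry = 0) /\ (ry *m rx = 0) /\
    (forall j, rx *m rl2 j = 0) /\ (forall j, rl2 j *m ry = 0) /\
    (forall i, ry *m rl1 i = 0) /\ (forall i, rl1 i *m rx = 0) /\
    (forall i i', rl1 i *m rl1 i' = 0) /\
    (forall j j', rl2 j *m rl2 j' = 0)
}.

Definition rmod_nonzero (F : fieldType) n m (X : rmod F n m) : Prop :=
  (0 < d1 X + d2 X)%N.

Section Cochains.
Variables (F : fieldType) (n m : nat) (X Y : rmod F n m).

Definition C0 := ('M[F]_(d1 X, d1 Y) * 'M[F]_(d2 X, d2 Y))%type.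
(* 1-cochains: one map D_a : X_{s(a)} -> Y_{t(a)} per arrow a. *)
Definition C1 :=
  (('M[F]_(d1 X, d2 Y) * 'M[F]_(d2 X, d1 Y)) *
   ({ffun 'I_n -> 'M[F]_(d1 X, d1 Y)} * {ffun 'I_m -> 'M[F]_(d2 X, d2 Y)}))%type.
(* 2-cochains: one map per composable pair (a then b) of arrows. *)
Definition C2 :=
  ((('M[F]_(d1 X, d1 Y) * 'M[F]_(d2 X, d2 Y)) *
    ({ffun 'I_m -> 'M[F]_(d1 X, d2 Y)} * {ffun 'I_n -> 'M[F]_(d2 X, d1 Y)})) *
   (({ffun 'I_n -> 'M[F]_(d1 X, d2 Y)} * {ffun 'I_m -> 'M[F]_(d2 X, d1 Y)}) *
    ({ffun ('I_n * 'I_n)%type -> 'M[F]_(d1 X, d1 Y)} *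
     {ffun ('I_m * 'I_m)%type -> 'M[F]_(d2 X, d2 Y)})))%type.

(* delta0 H = (H_{s(a)} M^Y_a - M^X_a H_{t(a)})_a ; its kernel is Hom(X,Y). *)
Definition delta0 (H : C0) : C1 :=
  ((H.1 *m rx Y - rx X *m H.2, H.2 *m ry Y - ry X *m H.1),
   ([ffun i => H.1 *m rl1 Y i - rl1 X i *m H.1],
    [ffun j => H.2 *m rl2 Y j - rl2 X j *m H.2])).

(* delta1 D = (M^X_a D_b + D_a M^Y_b)_{(a,b) composable}: the condition that
   the block matrices [[M^X_a, D_a],[0, M^Y_a]] define a module E (i.e. that
   composites of two arrows vanish on E = X (+) Y), giving an extension
   0 -> Y -> E -> X -> 0. *)
Definition delta1 (D : C1) : C2 :=
  let: ((Dx, Dy), (Dl1, Dl2)) := D in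
  (((rx X *m Dy + Dx *m ry Y, ry X *m Dx + Dy *m rx Y),
    ([ffun j => rx X *m Dl2 j + Dx *m rl2 Y j],
     [ffun i => ry X *m Dl1 i + Dy *m rl1 Y i])),
   (([ffun i => rl1 X i *m Dx + Dl1 i *m rx Y],
     [ffun j => rl2 X j *m Dy + Dl2 j *m ry Y]),
    ([ffun p => rl1 X p.1 *m Dl1 p.2 + Dl1 p.1 *m rl1 Y p.2],
     [ffun q => rl2 X q.1 *m Dl2 q.2 + Dl2 q.1 *m rl2 Y q.2]))).

End Cochains.

Definition dimHom (F : fieldType) n m (X Y : rmod F n m) : nat :=
  \dim (lker (linfun (@delta0 F n m X Y))).

Definition dimExt1 (F : fieldType) n m (X Y : rmod F n m) : nat :=
  (\dim (lker (linfun (@delta1 F n m X Y)))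
   - \dim (limg (linfun (@delta0 F n m X Y))))%N.

Definition is_brick (F : fieldType) n m (X : rmod F n m) : Prop :=
  dimHom X X = 1%N.

Definition brick_set (F : fieldType) n m k (phi : 'I_k -> rmod F n m) : Prop :=
  (forall i, rmod_nonzero (phi i)) /\ (forall i, is_brick (phi i)) /\
  (forall i j, dimHom (phi i) (phi j) = (i == j)%N).

Definition adj_mx (F : fieldType) n m k (phi : 'I_k -> rmod F n m)
  : 'M[algC]_k := \matrix_(i, j) (dimExt1 (phi i) (phi j))%:R.

(* Spectral radius: max |lambda| over the complex eigenvalues (roots of the
   characteristic polynomial); 0 for the empty matrix. *)
Definition spec_radius k (M : 'M[algC]_k) : algC :=
  \big[Num.max/0]_(z <- sval (closed_field_poly_normal (char_poly M))) `|z|.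

Definition fpd_is (F : fieldType) (n m : nat) (v : algC) : Prop :=
  (forall k (phi : 'I_k -> rmod F n m), brick_set phi ->
     spec_radius (adj_mx phi) <= v) /\
  (forall e : algC, 0 < e -> exists k (phi : 'I_k -> rmod F n m),
     brick_set phi /\ v - e < spec_radius (adj_mx phi)).

(* The bricks of this radical-square-zero algebra are the simples S1, S2 and
   the two 2-dimensional uniserial modules: a loop of a brick is a square-zero
   endomorphism, hence zero, and if an arrow a acts nontrivially then for
   every rank-one N the pair (a N, N a) is an endomorphism, hence scalar,
   which bounds both vertex dimensions by the rank of N.  Any two of these
   four bricks except S1, S2 admit a nonzero homomorphism (a composition
   factor of the top of one lies in the socle of the other), so a brick set
   is a single brick or {S1, S2}.  A uniserial brick has a self-extension
   space of dimension at most one, while {S1, S2} has Ext-matrix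
   [[n, 1], [1, m]], whose spectral radius is the larger root of
   (t - n) (t - m) = 1, which is the claimed value and dominates n, m and 1. *)

From HB Require Import structures.
From mathcomp Require Import all_boot all_order all_algebra all_field.
From mathcomp Require Import ring zify.
Set Implicit Arguments. Unset Strict Implicit. Unset Printing Implicit Defensive.
Import Order.TTheory GRing.Theory Num.Theory.
Local Open Scope ring_scope.

Section ScalarMatrices.
Variable F : fieldType.

Lemma pair_eq0 (U V : nmodType) (a : U) (b : V) : ((a, b) == 0) = (a == 0) && (b == 0).
Proof. exact: xpair_eqE. Qed.

Lemma scalar1_eq0 p : ((1%:M : 'M[F]_p) == 0) = (p == 0%N).
Proof. by rewrite -mxrank_eq0 mxrank1. Qed.

Lemma square_zero_scalar p (A : 'M[F]_p) c : A = c%:M -> A *m A = 0 -> A = 0.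
Proof.
move=> Ac; rewrite {1}Ac mul_scalar_mx => /eqP; rewrite scaler_eq0.
by case/orP => /eqP // c0; rewrite Ac c0 -scalemx1 scale0r.
Qed.

Lemma mul_delta_mx_diag p q (A : 'M[F]_(p, q)) i j : (A *m delta_mx j i) i i = A i j.
Proof.
rewrite mxE (bigD1 j) //= big1 => [|k /negPf kj]; last by rewrite mxE kj mulr0.
by rewrite mxE !eqxx mulr1 addr0.
Qed.

Lemma scalar_products_dims1 p q (A : 'M[F]_(p, q)) : A != 0 ->
  (forall N : 'M_(q, p), exists c, A *m N = c%:M /\ N *m A = c%:M) ->
  p = 1%N /\ q = 1%N.
Proof.
move=> /matrix0Pn [i [j Aij]] scal; have [c [AN NA]] := scal (delta_mx j i).
have c_neq0 : c != 0.
  by move/matrixP: AN => /(_ i i); rewrite mul_delta_mx_diag mxE eqxx mulr1n => <-.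
have rank_c r : \rank (c%:M : 'M_r) = r.
  by rewrite -scalemx1 mxrank_scale_nz ?mxrank1.
have := mxrankM_maxr A (delta_mx j i); rewrite AN rank_c mxrank_delta.
have := mxrankM_maxl (delta_mx j i) A; rewrite NA rank_c mxrank_delta.
by have := ltn_ord i; have := ltn_ord j; lia.
Qed.

Lemma nonzero_row_full p q (A : 'M[F]_(p, q)) : q = 1%N -> A != 0 -> row_full A.
Proof. by move=> q1; subst q; rewrite /row_full eqn_leq rank_leq_col lt0n mxrank_eq0. Qed.

Lemma nonzero_row_free p q (A : 'M[F]_(p, q)) : p = 1%N -> A != 0 -> row_free A.
Proof. by move=> p1; subst p; rewrite /row_free eqn_leq rank_leq_row lt0n mxrank_eq0. Qed.

Lemma const_mx1_neq0 p q : (0 < p)%N -> (0 < q)%N -> (const_mx 1 : 'M[F]_(p, q)) != 0.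
Proof.
move=> p0 q0; apply/matrix0Pn; exists (Ordinal p0), (Ordinal q0).
by rewrite mxE oner_neq0.
Qed.

Lemma mx11_scale_const p q (A : 'M[F]_(p, q)) : p = 1%N -> q = 1%N ->
  exists a, A = a *: const_mx 1.
Proof.
move=> p1 q1; subst p q; exists (A 0 0).
by apply/matrixP => i j; rewrite !ord1 !mxE mulr1.
Qed.

End ScalarMatrices.

Lemma det_mx22 (R : comNzRingType) (A : 'M[R]_2) : \det A = A 0 0 * A 1 1 - A 0 1 * A 1 0.
Proof.
rewrite (expand_det_row _ 0) !big_ord_recl big_ord0 addr0 /cofactor !det_mx11 !mxE /=.
have -> : lift 0 0 = 1 :> 'I_2 by apply: val_inj.
have -> : lift 1 0 = 0 :> 'I_2 by apply: val_inj.
by rewrite /bump /= expr0 expr1 mul1r mulN1r mulrN.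
Qed.

Section SmallCharPoly.
Variable R : comNzRingType.

Lemma root_char_poly_mx22 (A : 'M[R]_2) z : root (char_poly A) z =
  ((z - A 0 0) * (z - A 1 1) - A 0 1 * A 1 0 == 0).
Proof.
by rewrite /root /char_poly det_mx22 !mxE /= mulr1n mulr0n !sub0r mulrNN !hornerE.
Qed.

Lemma root_char_poly_mx11 (A : 'M[R]_1) z : root (char_poly A) z = (z == A 0 0).
Proof. by rewrite /char_poly det_mx11 !mxE mulr1n root_XsubC. Qed.

Lemma root_char_poly_mx00 (A : 'M[R]_0) z : root (char_poly A) z = false.
Proof. by rewrite /char_poly det_mx00; exact/negbTE/root1. Qed.

End SmallCharPoly.

Section SpectralRadius.
Variable r : nat.
Implicit Type M : 'M[algC]_r.

Lemma mem_spec_roots M z :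
  (z \in sval (closed_field_poly_normal (char_poly M))) = root (char_poly M) z.
Proof.
case: closed_field_poly_normal => s /= ->.
by rewrite (monicP (char_poly_monic M)) scale1r root_prod_XsubC.
Qed.

Lemma spec_radius_le M v : 0 <= v ->
  (forall z, root (char_poly M) z -> `|z| <= v) -> spec_radius M <= v.
Proof.
move=> v_ge0 le_v; rewrite /spec_radius big_seq.
by apply: bigmax_le => // z; rewrite mem_spec_roots; exact: le_v.
Qed.

Lemma spec_radius_ge M z : root (char_poly M) z -> `|z| <= spec_radius M.
Proof.
rewrite -mem_spec_roots /spec_radius; elim: (sval _) => [|a s IH] //.
have real_max : \big[Num.max/0]_(w <- s) `|w| \is Num.real.
  by apply: bigmax_real => // w _; exact: normr_real.
rewrite inE big_cons comparable_le_max ?real_comparable ?normr_real //.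
by case/predU1P => [->|/IH ->]; rewrite ?lexx ?orbT.
Qed.

End SpectralRadius.

Definition fpd_value (p q : nat) : algC :=
  (sqrtC ((q%:R - p%:R) ^+ 2 + 4) + q%:R + p%:R) / 2.

Lemma fpd_valueC p q : fpd_value p q = fpd_value q p.
Proof. by rewrite /fpd_value -sqrrN opprB addrAC. Qed.

Section FpdValue.
Variables p q : nat.
Local Notation v := (fpd_value p q).
Local Notation d := (q%:R - p%:R : algC).
Local Notation s := (sqrtC (d ^+ 2 + 4)).

Let d_real : d \is Num.real. Proof. by rewrite rpredB ?realn. Qed.
Let sqr_d_ge0 : 0 <= d ^+ 2. Proof. by rewrite -real_normK // exprn_ge0. Qed.
Let s_ge0 : 0 <= s. Proof. by rewrite sqrtC_ge0 addr_ge0 ?ler0n. Qed.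

Let sqr_le_s (x : algC) : 0 <= x -> x ^+ 2 <= d ^+ 2 + 4 -> x <= s.
Proof.
move=> x_ge0 le_x; rewrite -(sqrCK x_ge0) ler_sqrtC // qualifE /=.
  by rewrite exprn_ge0.
by rewrite addr_ge0 ?ler0n.
Qed.

Let two_v : 2 * v = s + p%:R + q%:R.
Proof. by rewrite /fpd_value mulrC divfK ?pnatr_eq0 // addrAC. Qed.

Lemma fpd_value_root : (v - p%:R) * (v - q%:R) = 1.
Proof.
apply: (@mulfI _ 4); first by rewrite pnatr_eq0.
have -> : 4 * ((v - p%:R) * (v - q%:R)) = (2 * v - p%:R - q%:R) ^+ 2 - d ^+ 2 by ring.
have -> : 2 * v - p%:R - q%:R = s by rewrite two_v; ring.
by rewrite sqrtCK addrAC subrr add0r mulr1.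
Qed.

Let abs_d_le_s : `|d| <= s.
Proof. by apply: sqr_le_s; rewrite ?normr_ge0 // real_normK // lerDl ler0n. Qed.

Lemma fpd_value_ge_p : p%:R <= v.
Proof.
rewrite -subr_ge0 -(pmulr_rge0 _ (ltr0n algC 2)).
have -> : 2 * (v - p%:R) = s - - d by rewrite mulrBr two_v; ring.
by rewrite subr_ge0 (le_trans _ abs_d_le_s) // -normrN real_ler_norm ?rpredN.
Qed.

Lemma fpd_value_ge_q : q%:R <= v.
Proof.
rewrite -subr_ge0 -(pmulr_rge0 _ (ltr0n algC 2)).
have -> : 2 * (v - q%:R) = s - d by rewrite mulrBr two_v; ring.
by rewrite subr_ge0 (le_trans _ abs_d_le_s) // real_ler_norm.
Qed.

Lemma fpd_value_ge1 : 1 <= v.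
Proof.
have two_le_s : 2 <= s by apply: sqr_le_s; rewrite ?ler0n // -natrX lerDr.
rewrite -(ler_pM2l (ltr0n algC 2)) mulr1 two_v -addrA.
by apply: le_trans two_le_s _; rewrite lerDl addr_ge0 ?ler0n.
Qed.

Lemma fpd_value_ge0 : 0 <= v.
Proof. exact: le_trans fpd_value_ge1. Qed.

Definition ext_mx2 (M : 'M[algC]_2) :=
  [/\ M 0 0 = p%:R, M 0 1 = 1, M 1 0 = 1 & M 1 1 = q%:R].

Lemma spec_radius_ext_mx2 M : ext_mx2 M -> spec_radius M = v.
Proof.
case=> M00 M01 M10 M11.
have rootE z : root (char_poly M) z = (z == v) || (z == p%:R + q%:R - v).
  rewrite root_char_poly_mx22 M00 M01 M10 M11 mulr1.
  have -> : (z - p%:R) * (z - q%:R) - 1 =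
      (z - v) * (z - (p%:R + q%:R - v)) + ((v - p%:R) * (v - q%:R) - 1) by ring.
  by rewrite fpd_value_root subrr addr0 mulf_eq0 !subr_eq0.
apply/le_anti/andP; split.
  apply: spec_radius_le fpd_value_ge0 _ => z; rewrite rootE => /orP[] /eqP ->.
    by rewrite ger0_norm ?fpd_value_ge0.
  rewrite real_ler_norml ?rpredB ?rpredD ?realn ?ger0_real ?fpd_value_ge0 //.
  rewrite lerBlDr -{1}[- v]add0r lerD2r addr_ge0 ?ler0n //=.
  by rewrite -mulr2n -(mulr_natl v 2) two_v -addrA lerDr.
by rewrite -{1}(ger0_norm fpd_value_ge0); apply: spec_radius_ge; rewrite rootE eqxx.
Qed.

End FpdValue.

Section Cochains.
Variables (F : fieldType) (n m : nat) (X Y : rmod F n m).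

Let commutator_linear a p q r s (A : 'M[F]_(p, q)) (B : 'M[F]_(r, s))
    (H K : 'M[F]_(p, r)) (H' K' : 'M[F]_(q, s)) :
  (a *: H + K) *m B - A *m (a *: H' + K') =
  a *: (H *m B - A *m H') + (K *m B - A *m K').
Proof. by rewrite mulmxDl mulmxDr -scalemxAl -scalemxAr scalerBr addrACA opprD. Qed.

Let anticommutator_linear a p q r s (A : 'M[F]_(p, q)) (B : 'M[F]_(r, s))
    (H K : 'M[F]_(p, r)) (H' K' : 'M[F]_(q, s)) :
  A *m (a *: H' + K') + (a *: H + K) *m B =
  a *: (A *m H' + H *m B) + (A *m K' + K *m B).
Proof. by rewrite mulmxDl mulmxDr -scalemxAl -scalemxAr scalerDr addrACA. Qed.

Lemma delta0_is_linear : linear (@delta0 F n m X Y).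
Proof.
move=> a [H1 H2] [K1 K2]; rewrite /delta0 /= !commutator_linear.
by congr (_, (_, _)); apply/ffunP => i; rewrite !ffunE commutator_linear.
Qed.

HB.instance Definition _ :=
  GRing.isLinear.Build F (C0 X Y) (C1 X Y) _ (@delta0 F n m X Y) delta0_is_linear.

Lemma delta1_is_linear : linear (@delta1 F n m X Y).
Proof.
move=> a [[Dx Dy] [Dl1 Dl2]] [[Ex Ey] [El1 El2]]; rewrite /delta1 /=.
rewrite !anticommutator_linear.
do 3 (apply: injective_projections => /=) => //; apply/ffunP => i;
  by rewrite !ffunE anticommutator_linear.
Qed.

HB.instance Definition _ :=
  GRing.isLinear.Build F (C1 X Y) (C2 X Y) _ (@delta1 F n m X Y) delta1_is_linear.

Lemma mem_lker_delta0 (H : C0 X Y) :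
  (H \in lker (linfun (@delta0 F n m X Y))) = (delta0 H == 0).
Proof. by rewrite memv_ker lfunE. Qed.

Lemma mem_lker_delta1 (D : C1 X Y) :
  (D \in lker (linfun (@delta1 F n m X Y))) = (delta1 D == 0).
Proof. by rewrite memv_ker lfunE. Qed.

Lemma delta0_eq0 (H : C0 X Y) :
  H.1 *m rx Y = rx X *m H.2 -> H.2 *m ry Y = ry X *m H.1 ->
  (forall i, H.1 *m rl1 Y i = rl1 X i *m H.1) ->
  (forall j, H.2 *m rl2 Y j = rl2 X j *m H.2) -> delta0 H = 0.
Proof.
move=> hx hy hl1 hl2; rewrite /delta0 hx hy !subrr.
by congr (_, (_, _)); apply/ffunP => i; rewrite !ffunE (hl1, hl2) subrr.
Qed.

Lemma dimHom_gt0 (H : C0 X Y) : delta0 H = 0 -> H != 0 -> (0 < dimHom X Y)%N.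
Proof.
move=> dH; apply: contraNT; rewrite -eqn0Ngt /dimHom dimv_eq0 => /eqP ker0.
by rewrite -memv0 -ker0 mem_lker_delta0 dH.
Qed.

End Cochains.

Section Semisimple.
Variables (F : fieldType) (n m : nat).
Implicit Types X Y : rmod F n m.

Definition loop_free X := (forall i, rl1 X i = 0) /\ (forall j, rl2 X j = 0).

Definition semisimple X := [/\ rx X = 0, ry X = 0 & loop_free X].

Lemma loop_free_delta0_eq0 X Y (H : C0 X Y) : loop_free X -> loop_free Y ->
  H.1 *m rx Y = rx X *m H.2 -> H.2 *m ry Y = ry X *m H.1 -> delta0 H = 0.
Proof.
move=> [l1X l2X] [l1Y l2Y] hx hy; apply: delta0_eq0 => // [i|j].
  by rewrite l1X l1Y mulmx0 mul0mx.
by rewrite l2X l2Y mulmx0 mul0mx.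
Qed.

Variables (X Y : rmod F n m).
Hypotheses (ssX : semisimple X) (ssY : semisimple Y).

Lemma lker_delta0_semisimple : lker (linfun (@delta0 F n m X Y)) = fullv.
Proof.
case: ssX ssY => xX yX lX [xY yY lY].
apply/vspaceP => H; rewrite memvf mem_lker_delta0 loop_free_delta0_eq0 ?eqxx //.
  by rewrite xX xY mulmx0 mul0mx.
by rewrite yX yY mulmx0 mul0mx.
Qed.

Lemma lker_delta1_semisimple : lker (linfun (@delta1 F n m X Y)) = fullv.
Proof.
case: ssX ssY => xX yX [l1X l2X] [xY yY [l1Y l2Y]].
apply/vspaceP => -[[Dx Dy] [Dl1 Dl2]]; rewrite memvf mem_lker_delta1 /delta1.
rewrite xX yX xY yY !mulmx0 !mul0mx addr0.
apply/eqP; congr (((_, _), (_, _)), ((_, _), (_, _))); rewrite ?addr0 //;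
  by apply/ffunP => i; rewrite !ffunE ?l1X ?l2X ?l1Y ?l2Y ?mulmx0 ?mul0mx addr0.
Qed.

Lemma dimHom_semisimple : dimHom X Y = (d1 X * d1 Y + d2 X * d2 Y)%N.
Proof. by rewrite /dimHom lker_delta0_semisimple dimvf. Qed.

Lemma dimExt1_semisimple : dimExt1 X Y =
  (d1 X * d2 Y + d2 X * d1 Y + (n * (d1 X * d1 Y) + m * (d2 X * d2 Y)))%N.
Proof.
rewrite /dimExt1 lker_delta1_semisimple dimvf.
have /eqP -> : limg (linfun (@delta0 F n m X Y)) == 0%VS.
  by rewrite -lkerE lker_delta0_semisimple.
by rewrite dimv0 subn0 /dim /= /dim /= /dim /= !card_ord.
Qed.

End Semisimple.

Section Bricks.
Variables (F : fieldType) (n m : nat).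
Implicit Type X : rmod F n m.

(* [serial12 X] is the uniserial module with top S1 and socle S2 (x acts
   nontrivially); [serial21 X] is its mirror image. *)
Definition simple1 X := [/\ semisimple X, d1 X = 1%N & d2 X = 0%N].
Definition simple2 X := [/\ semisimple X, d1 X = 0%N & d2 X = 1%N].
Definition serial12 X := [/\ loop_free X, d1 X = 1%N, d2 X = 1%N, rx X != 0 & ry X = 0].
Definition serial21 X := [/\ loop_free X, d1 X = 1%N, d2 X = 1%N, ry X != 0 & rx X = 0].

Variable X : rmod F n m.
Hypothesis bX : is_brick X.

Lemma brick_endo_scalar (H : C0 X X) : delta0 H = 0 -> exists c, H = (c%:M, c%:M).
Proof.
move=> dH; pose id : C0 X X := (1%:M, 1%:M).
have id_hom : id \in lker (linfun (@delta0 F n m X X)).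
  by rewrite mem_lker_delta0 delta0_eq0 // => *; rewrite mul1mx mulmx1.
have id_neq0 : id != 0.
  have : (dimHom X X <= d1 X * d1 X + d2 X * d2 X)%N.
    by apply: leq_trans (dimvS (subvf _)) _; rewrite dimvf.
  rewrite bX => pos; apply/eqP => id0.
  move: (congr1 fst id0) (congr1 snd id0) => /= /eqP + /eqP.
  by rewrite !scalar1_eq0 => /eqP d10 /eqP d20; rewrite d10 d20 in pos.
have ker_line : lker (linfun (@delta0 F n m X X)) = <[id]>%VS.
  apply/eqP; rewrite eq_sym eqEdim -memvE id_hom dim_vline id_neq0.
  by move: bX; rewrite /is_brick /dimHom => ->.
have : H \in lker (linfun (@delta0 F n m X X)) by rewrite mem_lker_delta0 dH.
rewrite ker_line => /vlineP [c ->]; exists c.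
by apply: injective_projections; rewrite /= scalemx1.
Qed.

Lemma brick_loop_free : loop_free X.
Proof.
have [_ [_ [xl2 [l2y [yl1 [l1x [l1l1 l2l2]]]]]]] := rad2_zero X.
split=> [i|j].
  have [|c [lc _]] := @brick_endo_scalar (rl1 X i, 0).
    apply: delta0_eq0 => [|||j] /=; rewrite ?l1x ?yl1 ?mulmx0 ?mul0mx //.
    by move=> i'; rewrite !l1l1.
  exact: square_zero_scalar lc (l1l1 i i).
have [|c [_ lc]] := @brick_endo_scalar (0, rl2 X j).
  apply: delta0_eq0 => [||i|] /=; rewrite ?xl2 ?l2y ?mulmx0 ?mul0mx //.
  by move=> j'; rewrite !l2l2.
exact: square_zero_scalar lc (l2l2 j j).
Qed.

Lemma brick_rx_scalar (N : 'M_(d2 X, d1 X)) :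
  exists c, rx X *m N = c%:M /\ N *m rx X = c%:M.
Proof.
have [xy [yx _]] := rad2_zero X; have lX := brick_loop_free.
have [|c [h1 h2]] := @brick_endo_scalar (rx X *m N, N *m rx X); last by exists c.
apply: loop_free_delta0_eq0 => //=; first by rewrite mulmxA.
by rewrite -mulmxA xy mulmx0 mulmxA yx mul0mx.
Qed.

Lemma brick_ry_scalar (N : 'M_(d1 X, d2 X)) :
  exists c, ry X *m N = c%:M /\ N *m ry X = c%:M.
Proof.
have [xy [yx _]] := rad2_zero X; have lX := brick_loop_free.
have [|c [h1 h2]] := @brick_endo_scalar (N *m ry X, ry X *m N); last by exists c.
apply: loop_free_delta0_eq0 => //=; last by rewrite mulmxA.
by rewrite -mulmxA yx mulmx0 mulmxA xy mul0mx.
Qed.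

Lemma brick_rx_neq0 : rx X != 0 -> serial12 X.
Proof.
move=> x0; have [xy _] := rad2_zero X.
have [d1X d2X] := scalar_products_dims1 x0 brick_rx_scalar.
split=> //; first exact: brick_loop_free.
by apply: (row_full_inj (nonzero_row_full d2X x0)); rewrite xy mulmx0.
Qed.

Lemma brick_ry_neq0 : ry X != 0 -> serial21 X.
Proof.
move=> y0; have [_ [yx _]] := rad2_zero X.
have [d2X d1X] := scalar_products_dims1 y0 brick_ry_scalar.
split=> //; first exact: brick_loop_free.
by apply: (row_full_inj (nonzero_row_full d1X y0)); rewrite yx mulmx0.
Qed.

Lemma brick_cases : [\/ simple1 X, simple2 X, serial12 X | serial21 X].
Proof.
have [x0|/brick_rx_neq0] := eqVneq (rx X) 0; last by constructor 3.
have [y0|/brick_ry_neq0] := eqVneq (ry X) 0; last by constructor 4.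
have ssX : semisimple X by split=> //; exact: brick_loop_free.
move: bX; rewrite /is_brick dimHom_semisimple // => dims.
have [[d1X d2X]|[d1X d2X]] : (d1 X = 1 /\ d2 X = 0 \/ d1 X = 0 /\ d2 X = 1)%N by lia.
  by constructor 1.
by constructor 2.
Qed.

End Bricks.

Section Homs.
Variables (F : fieldType) (n m : nat).
Variables (X Y : rmod F n m).
Hypotheses (lX : loop_free X) (lY : loop_free Y).

(* The witness (N, 0) factors through S1, which lies in the top of X when
   ry X = 0 and in the socle of Y when rx Y = 0. *)
Lemma dimHom_gt0_vertex1 : ry X = 0 -> rx Y = 0 ->
  (0 < d1 X)%N -> (0 < d1 Y)%N -> (0 < dimHom X Y)%N.
Proof.
move=> yX xY pX pY; apply: (dimHom_gt0 (H := (const_mx 1, 0))).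
  by apply: loop_free_delta0_eq0 => //=; rewrite ?xY ?yX ?mulmx0 ?mul0mx.
by rewrite pair_eq0 negb_and const_mx1_neq0.
Qed.

Lemma dimHom_gt0_vertex2 : rx X = 0 -> ry Y = 0 ->
  (0 < d2 X)%N -> (0 < d2 Y)%N -> (0 < dimHom X Y)%N.
Proof.
move=> xX yY pX pY; apply: (dimHom_gt0 (H := (0, const_mx 1))).
  by apply: loop_free_delta0_eq0 => //=; rewrite ?xX ?yY ?mulmx0 ?mul0mx.
by rewrite pair_eq0 negb_and const_mx1_neq0 ?orbT.
Qed.

Lemma dimHom_gt0_arrow_x : ry X = 0 -> ry Y = 0 -> rx Y != 0 -> d1 Y = 1%N ->
  (0 < d2 X)%N -> (0 < dimHom X Y)%N.
Proof.
move=> yX yY xY dY pX; pose N : 'M[F]_(d2 X, d1 Y) := const_mx 1.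
apply: (dimHom_gt0 (H := (rx X *m N, N *m rx Y))).
  apply: loop_free_delta0_eq0 => //=; first by rewrite mulmxA.
  by rewrite yX yY !mulmx0 mul0mx.
rewrite pair_eq0 negb_and -(mul0mx _ (rx Y)).
by rewrite (inj_eq (row_free_inj (nonzero_row_free dY xY))) const_mx1_neq0 ?orbT ?dY.
Qed.

Lemma dimHom_gt0_arrow_y : rx X = 0 -> rx Y = 0 -> ry Y != 0 -> d2 Y = 1%N ->
  (0 < d1 X)%N -> (0 < dimHom X Y)%N.
Proof.
move=> xX xY yY dY pX; pose N : 'M[F]_(d1 X, d2 Y) := const_mx 1.
apply: (dimHom_gt0 (H := (N *m ry Y, ry X *m N))).
  apply: loop_free_delta0_eq0 => //=; last by rewrite mulmxA.
  by rewrite xX xY !mulmx0 mul0mx.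
rewrite pair_eq0 negb_and -(mul0mx _ (ry Y)).
by rewrite (inj_eq (row_free_inj (nonzero_row_free dY yY))) const_mx1_neq0 ?dY.
Qed.

End Homs.

Lemma brick_orthogonal_pair (F : fieldType) n m (X Y : rmod F n m) :
  is_brick X -> is_brick Y -> dimHom X Y = 0%N -> dimHom Y X = 0%N ->
  (simple1 X /\ simple2 Y) \/ (simple2 X /\ simple1 Y).
Proof.
move=> bX bY hXY hYX.
case: (brick_cases bX) => [[[xX yX lX] d1X d2X]|[[xX yX lX] d1X d2X]|
                            [lX d1X d2X xX yX]|[lX d1X d2X yX xX]];
case: (brick_cases bY) => [[[xY yY lY] d1Y d2Y]|[[xY yY lY] d1Y d2Y]|
                            [lY d1Y d2Y xY yY]|[lY d1Y d2Y yY xY]];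
  try by [left | right].
all: suff: (0 < dimHom X Y)%N || (0 < dimHom Y X)%N by rewrite hXY hYX.
all: apply/orP; first
  [ left; by [ apply: dimHom_gt0_vertex1; rewrite ?d1X ?d1Y
             | apply: dimHom_gt0_vertex2; rewrite ?d2X ?d2Y
             | apply: dimHom_gt0_arrow_x; rewrite ?d2X
             | apply: dimHom_gt0_arrow_y; rewrite ?d1X ]
  | right; by [ apply: dimHom_gt0_vertex1; rewrite ?d1X ?d1Y
              | apply: dimHom_gt0_vertex2; rewrite ?d2X ?d2Y
              | apply: dimHom_gt0_arrow_x; rewrite ?d2Y
              | apply: dimHom_gt0_arrow_y; rewrite ?d1Y ] ].
Qed.

Section SerialExt.
Variables (F : fieldType) (n m : nat) (X : rmod F n m).

(* A 1-cocycle of a uniserial brick is determined by the component of the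
   nonzero arrow, a 1 x 1 matrix. *)
Lemma dimExt1_serial12 : serial12 X -> (dimExt1 X X <= 1)%N.
Proof.
case=> [[l1 l2] d1X d2X x0 y0].
have full := nonzero_row_full d2X x0; have free := nonzero_row_free d1X x0.
apply: leq_trans (leq_subr _ _) _.
pose D0 : C1 X X := ((const_mx 1, 0), 0).
suff: (lker (linfun (@delta1 F n m X X)) <= <[D0]>)%VS.
  by move/dimvS/leq_trans; apply; rewrite dim_vline leq_b1.
apply/subvP => -[[Dx Dy] [Dl1 Dl2]]; rewrite mem_lker_delta1 => /eqP dD.
move: (congr1 (fun z : C2 X X => z.1.1.1) dD) (congr1 (fun z : C2 X X => z.1.2.1) dD)
  (congr1 (fun z : C2 X X => z.2.1.1) dD) => /= e1 e2 e3.
have Dy0 : Dy = 0.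
  by apply: (row_full_inj full); rewrite mulmx0 -e1 y0 mulmx0 addr0.
have Dl10 : Dl1 = 0.
  apply/ffunP => i; apply: (row_free_inj free); move/ffunP/(_ i): e3.
  by rewrite !ffunE l1 !mul0mx add0r.
have Dl20 : Dl2 = 0.
  apply/ffunP => j; apply: (row_full_inj full); move/ffunP/(_ j): e2.
  by rewrite !ffunE l2 !mulmx0 addr0.
have [a ->] := mx11_scale_const Dx d1X d2X.
apply/vlineP; exists a; rewrite Dy0 Dl10 Dl20.
by apply: injective_projections; [apply: injective_projections|]; rewrite /= ?scaler0.
Qed.

Lemma dimExt1_serial21 : serial21 X -> (dimExt1 X X <= 1)%N.
Proof.
case=> [[l1 l2] d1X d2X y0 x0].
have full := nonzero_row_full d1X y0; have free := nonzero_row_free d2X y0.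
apply: leq_trans (leq_subr _ _) _.
pose D0 : C1 X X := ((0, const_mx 1), 0).
suff: (lker (linfun (@delta1 F n m X X)) <= <[D0]>)%VS.
  by move/dimvS/leq_trans; apply; rewrite dim_vline leq_b1.
apply/subvP => -[[Dx Dy] [Dl1 Dl2]]; rewrite mem_lker_delta1 => /eqP dD.
move: (congr1 (fun z : C2 X X => z.1.1.2) dD) (congr1 (fun z : C2 X X => z.1.2.2) dD)
  (congr1 (fun z : C2 X X => z.2.1.2) dD) => /= e1 e2 e3.
have Dx0 : Dx = 0.
  by apply: (row_full_inj full); rewrite mulmx0 -e1 x0 mulmx0 addr0.
have Dl10 : Dl1 = 0.
  apply/ffunP => i; apply: (row_full_inj full); move/ffunP/(_ i): e2.
  by rewrite !ffunE l1 !mulmx0 addr0.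
have Dl20 : Dl2 = 0.
  apply/ffunP => j; apply: (row_free_inj free); move/ffunP/(_ j): e3.
  by rewrite !ffunE l2 !mul0mx add0r.
have [a ->] := mx11_scale_const Dy d2X d1X.
apply/vlineP; exists a; rewrite Dx0 Dl10 Dl20.
by apply: injective_projections; [apply: injective_projections|]; rewrite /= ?scaler0.
Qed.

End SerialExt.

Section BrickSets.
Variables (F : fieldType) (n m : nat).
Implicit Types X Y : rmod F n m.

Lemma dimExt1_simple11 X Y : simple1 X -> simple1 Y -> dimExt1 X Y = n.
Proof. by case=> ssX ? ? [ssY ? ?]; rewrite dimExt1_semisimple //; lia. Qed.

Lemma dimExt1_simple12 X Y : simple1 X -> simple2 Y -> dimExt1 X Y = 1%N.
Proof. by case=> ssX ? ? [ssY ? ?]; rewrite dimExt1_semisimple //; lia. Qed.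

Lemma dimExt1_simple21 X Y : simple2 X -> simple1 Y -> dimExt1 X Y = 1%N.
Proof. by case=> ssX ? ? [ssY ? ?]; rewrite dimExt1_semisimple //; lia. Qed.

Lemma dimExt1_simple22 X Y : simple2 X -> simple2 Y -> dimExt1 X Y = m.
Proof. by case=> ssX ? ? [ssY ? ?]; rewrite dimExt1_semisimple //; lia. Qed.

Lemma adj_mx_simple12 (phi : 'I_2 -> rmod F n m) :
  simple1 (phi 0) -> simple2 (phi 1) -> ext_mx2 n m (adj_mx phi).
Proof.
move=> s0 s1; split; rewrite mxE;
  by [ rewrite dimExt1_simple11 | rewrite dimExt1_simple12
     | rewrite dimExt1_simple21 | rewrite dimExt1_simple22 ].
Qed.

Lemma adj_mx_simple21 (phi : 'I_2 -> rmod F n m) :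
  simple2 (phi 0) -> simple1 (phi 1) -> ext_mx2 m n (adj_mx phi).
Proof.
move=> s0 s1; split; rewrite mxE;
  by [ rewrite dimExt1_simple11 | rewrite dimExt1_simple12
     | rewrite dimExt1_simple21 | rewrite dimExt1_simple22 ].
Qed.

Lemma dimExt1_brick_le X : is_brick X -> (dimExt1 X X)%:R <= fpd_value n m.
Proof.
case/brick_cases => [t|t|t|t].
- by rewrite dimExt1_simple11 // fpd_value_ge_p.
- by rewrite dimExt1_simple22 // fpd_value_ge_q.
- by apply: le_trans (fpd_value_ge1 n m); rewrite lern1 dimExt1_serial12.
- by apply: le_trans (fpd_value_ge1 n m); rewrite lern1 dimExt1_serial21.
Qed.

Variables (K : nat) (phi : 'I_K -> rmod F n m).
Hypothesis bphi : brick_set phi.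

Lemma brick_set_pair i j : i != j ->
  (simple1 (phi i) /\ simple2 (phi j)) \/ (simple2 (phi i) /\ simple1 (phi j)).
Proof.
case: bphi => _ [brick hom] ij.
by apply: brick_orthogonal_pair => //; rewrite hom ?(negPf ij) // eq_sym (negPf ij).
Qed.

Lemma brick_set_card : (K <= 2)%N.
Proof.
rewrite -[K]card_ord -[2%N]card_bool; apply: (@leq_card _ _ (fun i => d2 (phi i) == 0%N)).
move=> i j; apply: contra_eq => /brick_set_pair [[[_ _ ->] [_ _ ->]]|[[_ _ ->] [_ _ ->]]] //.
Qed.

End BrickSets.

Lemma spec_radius_brick_set_le (F : fieldType) n m K (phi : 'I_K -> rmod F n m) :
  brick_set phi -> spec_radius (adj_mx phi) <= fpd_value n m.
Proof.
move=> bphi; move: phi bphi (brick_set_card bphi).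
case: K => [|[|[|K']]] // psi bpsi _.
- by apply: spec_radius_le (fpd_value_ge0 n m) _ => z; rewrite root_char_poly_mx00.
- apply: spec_radius_le (fpd_value_ge0 n m) _ => z.
  have [_ [brick _]] := bpsi; rewrite root_char_poly_mx11 mxE => /eqP ->.
  by rewrite normr_nat; exact: dimExt1_brick_le.
- have [[s0 s1]|[s0 s1]] := brick_set_pair bpsi (isT : (0 : 'I_2) != 1).
    by rewrite (spec_radius_ext_mx2 (adj_mx_simple12 s0 s1)).
  by rewrite fpd_valueC (spec_radius_ext_mx2 (adj_mx_simple21 s0 s1)).
Qed.

Section Simples.
Variables (F : fieldType) (n m : nat).

Definition zero_rmod (p q : nat) : rmod F n m :=
  @RMod F n m p q 0 0 (fun=> 0) (fun=> 0) ltac:(by do !split=> *; rewrite mulmx0).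

Definition simples (i : 'I_2) : rmod F n m :=
  if i == 0 then zero_rmod 1 0 else zero_rmod 0 1.

Lemma brick_set_simples : brick_set simples.
Proof.
have ss i : semisimple (simples i) by rewrite /simples; case: (i == 0).
have hom i j : dimHom (simples i) (simples j) = (i == j).
  by rewrite dimHom_semisimple //; move: i j => [[|[|i]] Hi] [[|[|j]] Hj].
split; [|split] => // i; first by move: i => [[|[|i]] Hi].
by rewrite /is_brick hom eqxx.
Qed.

Lemma spec_radius_simples : spec_radius (adj_mx simples) = fpd_value n m.
Proof. by apply/spec_radius_ext_mx2/adj_mx_simple12. Qed.

End Simples.

Theorem mainTheorem5 (k : closedFieldType) (n m : nat) :
  fpd_is k n m
    ((sqrtC ((m%:R - n%:R) ^+ 2 + 4) + m%:R + n%:R) / 2).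
Proof.
split=> [K phi|e e_gt0]; first exact: spec_radius_brick_set_le.
exists 2%N, (simples k n m); split; first exact: brick_set_simples.
by rewrite spec_radius_simples ltrBlDr ltrDl.
Qed.
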